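(* Let $\theta$ be a real treatment effect, $\delta$ a clinical margin, $c\in(0,1)$, $\pi_{\mathrm{a}}$ an analysis prior and $\pi_{\mathrm{d}}$ a design prior with $\gamma_1=\Pr_{\mathrm{d}}(\theta>\delta)$, $\gamma_0=1-\gamma_1$. With $\mathcal{S}=\mathbb{I}\{\Pr_{\mathrm{a}}(\theta>\delta\mid\mathcal{D})>c\}$ and probabilities under the joint model $\theta\sim\pi_{\mathrm{d}}$, $\mathcal{D}\mid\theta\sim f(\cdot\mid\theta)$, let $\beta_C(c)=\Pr(\mathcal{S}=1\mid\theta>\delta)$, $\alpha_B(c)=\Pr(\mathcal{S}=1\mid\theta\le\delta)$, $\mathrm{PID}(c)=\Pr(\theta\le\delta\mid\mathcal{S}=1)=\frac{\gamma_0\alpha_B(c)}{\gamma_0\alpha_B(c)+\gamma_1\beta_C(c)}$, and let $\alpha(c)=\Pr(\mathcal{S}=1\mid\theta=\delta)$ be the frequentist Type I error rate. Under large-sample settings (in which $\alpha(c)$ is identified with its large-sample limit $1-c$), for any $c\in(0,1)$, $$-(1-c)\le\mathrm{PID}(c)-\alpha(c)\le c,$$ and, at the limits of the prior probability of effectiveness, $$\lim_{\gamma_1\to1}\bigl[\mathrm{PID}(c)-\alpha(c)\bigr]=-(1-c),\qquad\lim_{\gamma_1\to0}\bigl[\mathrm{PID}(c)-\alpha(c)\bigr]=c.$$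
   Context: $\Pr_{\mathrm{a}}(\cdot\mid\mathcal{D})$ is the posterior under the analysis prior. In large samples (under regularity conditions for the Bernstein–von Mises theorem) the frequentist Type I error of this rule converges to $1-c$. In the limits, $\alpha_B(c)$ and $\beta_C(c)$ are regarded as positive quantities held fixed while $\gamma_1$ varies. *)

From mathcomp Require Import all_boot all_order all_algebra.
From mathcomp Require Import all_classical all_reals all_analysis.
Set Implicit Arguments. Unset Strict Implicit. Unset Printing Implicit Defensive.
Import Order.TTheory GRing.Theory Num.Theory.
Local Open Scope ring_scope.

Section PIDdefs.
Variable R : realType.

Definition gamma0 (gamma1 : R) : R := 1 - gamma1.

Definition PID (gamma1 alphaB betaC : R) : R :=
  gamma0 gamma1 * alphaB / (gamma0 gamma1 * alphaB + gamma1 * betaC).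

(* Frequentist Type I error alpha(c), identified (large-sample setting) with
   its Bernstein--von Mises limit 1 - c. *)
Definition alpha_ls (c : R) : R := 1 - c.
End PIDdefs.

(* PID(c) is a conditional probability, hence lies in [0, 1], while the
   large-sample Type I error is the constant 1 - c; this gives both bounds.
   As a function of gamma1, PID is continuous wherever its denominator does
   not vanish, with PID = 0 at gamma1 = 1 and PID = 1 at gamma1 = 0, which
   gives the two limits. *)
From mathcomp Require Import all_boot all_order all_algebra.
From mathcomp Require Import all_classical all_reals all_analysis.
From mathcomp Require Import lra.
Import Order.TTheory GRing.Theory Num.Theory numFieldNormedType.Exports.
Local Open Scope ring_scope.
Local Open Scope classical_set_scope.

Section PIDTheory.
Context {R : realType}.
Implicit Types (x y alphaB betaC : R).

Lemma ratio_ge0_le1 x y : 0 <= x -> 0 <= y -> 0 <= x / (x + y) <= 1.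
Proof.
move=> x0 y0; have [xy0|xy_neq0] := eqVneq (x + y) 0.
  by rewrite xy0 invr0 mulr0 lexx ler01.
have xy_gt0 : 0 < x + y by rewrite lt0r xy_neq0 addr_ge0.
by rewrite divr_ge0 ?addr_ge0 //= ler_pdivrMr // mul1r lerDl.
Qed.

Lemma PID_ge0_le1 gamma1 alphaB betaC :
  0 <= gamma1 <= 1 -> 0 <= alphaB -> 0 <= betaC ->
  0 <= PID gamma1 alphaB betaC <= 1.
Proof.
move=> /andP[g0 g1] a0 b0; apply: ratio_ge0_le1; last exact: mulr_ge0.
by rewrite mulr_ge0 // subr_ge0.
Qed.

Lemma PID_gamma1_1 alphaB betaC : PID 1 alphaB betaC = 0.
Proof. by rewrite /PID /gamma0 subrr !mul0r. Qed.

Lemma PID_gamma1_0 alphaB betaC : alphaB != 0 -> PID 0 alphaB betaC = 1.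
Proof.
by move=> a_neq0; rewrite /PID /gamma0 subr0 !mul1r mul0r addr0 divff.
Qed.

Lemma PID_continuous_at gamma1 alphaB betaC :
  gamma0 gamma1 * alphaB + gamma1 * betaC != 0 ->
  PID g alphaB betaC @[g --> gamma1] --> PID gamma1 alphaB betaC.
Proof.
move=> den_neq0; rewrite /PID.
have cvg_gamma0 : gamma0 g @[g --> gamma1] --> gamma0 gamma1.
  exact: cvgB (cvg_cst _) cvg_id.
have cvg_num : gamma0 g * alphaB @[g --> gamma1] --> gamma0 gamma1 * alphaB.
  exact: cvgM cvg_gamma0 (cvg_cst _).
have cvg_den : gamma0 g * alphaB + g * betaC @[g --> gamma1] -->
               gamma0 gamma1 * alphaB + gamma1 * betaC.
  exact: cvgD cvg_num (cvgM cvg_id (cvg_cst _)).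
exact: cvgM cvg_num (cvgV den_neq0 cvg_den).
Qed.

End PIDTheory.

Theorem proposition4 (R : realType) (c : R) (hc0 : 0 < c) (hc1 : c < 1) :
  (forall gamma1 alphaB betaC : R,
      0 <= gamma1 <= 1 -> 0 <= alphaB <= 1 -> 0 <= betaC <= 1 ->
      0 < gamma0 gamma1 * alphaB + gamma1 * betaC ->
      - (1 - c) <= PID gamma1 alphaB betaC - alpha_ls c <= c)
  /\
  (forall alphaB betaC : R,
      0 < alphaB <= 1 -> 0 < betaC <= 1 ->
      ((PID g alphaB betaC - alpha_ls c) @[g --> (1:R)^'-] --> (- (1 - c) : R))
      /\ ((PID g alphaB betaC - alpha_ls c) @[g --> (0:R)^'+] --> (c : R))).
Proof.
rewrite /alpha_ls; split.
  move=> g a b g01 /andP[a0 _] /andP[b0 _] _.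
  have /andP[P0 P1] : 0 <= PID g a b <= 1 by exact: PID_ge0_le1.
  by apply/andP; split; lra.
move=> a b /andP[a0 _] /andP[b0 _]; split.
  have cvg_left1 : PID g a b - (1 - c) @[g --> (1:R)^'-] --> PID 1 a b - (1 - c).
    apply: cvg_at_left_filter; apply: cvgB; last exact: cvg_cst.
    by apply: PID_continuous_at; rewrite /gamma0 subrr mul0r add0r mul1r lt0r_neq0.
  rewrite PID_gamma1_1 sub0r in cvg_left1; exact: cvg_left1.
have cvg_right0 : PID g a b - (1 - c) @[g --> (0:R)^'+] --> PID 0 a b - (1 - c).
  apply: cvg_at_right_filter; apply: cvgB; last exact: cvg_cst.
  by apply: PID_continuous_at; rewrite /gamma0 subr0 mul1r mul0r addr0 lt0r_neq0.
rewrite PID_gamma1_0 ?subKr in cvg_right0; first exact: cvg_right0.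
exact: lt0r_neq0.
Qed.
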